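(* Let $A$ be a dga with a positive weight decomposition. If $H^*(A)$ is finite dimensional, then there are a rational number $\alpha>0$ and an integer $k\ge0$ such that $A$ is $(\alpha,k)$-segmented.
   Context: A weight decomposition of a non-negatively graded dga $A$ is a splitting $A^n=\bigoplus_pA^n_p$ with $dA^n_p\subseteq A^{n+1}_p$ and $A^n_pA^m_q\subseteq A^{n+m}_{p+q}$; it is positive if $A^0$ has weight $0$ and $A^i$ has positive weights for $i\ne0$. $A$ is $(\alpha,k)$-segmented if $H^n(A)_p:=H^n(A_p)$ is non-trivial only when $\alpha n\le p\le\alpha(n+k)$. *)

From HB Require Import structures.
From mathcomp Require Import all_boot all_order all_algebra.
Import Order.TTheory GRing.Theory Num.Theory.
Local Open Scope ring_scope.

Definition bcast {K : fieldType} {A : nat -> int -> lmodType K}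
  {n n' : nat} {p p' : int} (en : n = n') (ep : p = p') (x : A n p) : A n' p' :=
  match en in _ = n0, ep in _ = p0 return A n0 p0 with erefl, erefl => x end.

(* A non-negatively graded (unital, associative) dga over the field K together
   with a weight decomposition, presented as a bigraded object:
   wpiece n p = A^n_p, so that A^n = (+)_p A^n_p. *)
Record wdga (K : fieldType) := WDga {
  wpiece : nat -> int -> lmodType K;
  wd : forall n p, {linear wpiece n p -> wpiece n.+1 p};
  wmul : forall n m p q, wpiece n p -> wpiece m q -> wpiece (n + m)%N (p + q);
  wone : wpiece 0 0;
  wd_d : forall n p (x : wpiece n p), wd _ _ (wd _ _ x) = 0;
  wmulDl : forall n m p q (x1 x2 : wpiece n p) (y : wpiece m q),
      wmul _ _ _ _ (x1 + x2) y = wmul _ _ _ _ x1 y + wmul _ _ _ _ x2 y;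
  wmulDr : forall n m p q (x : wpiece n p) (y1 y2 : wpiece m q),
      wmul _ _ _ _ x (y1 + y2) = wmul _ _ _ _ x y1 + wmul _ _ _ _ x y2;
  wmulZl : forall n m p q (a : K) (x : wpiece n p) (y : wpiece m q),
      wmul _ _ _ _ (a *: x) y = a *: wmul _ _ _ _ x y;
  wmulZr : forall n m p q (a : K) (x : wpiece n p) (y : wpiece m q),
      wmul _ _ _ _ x (a *: y) = a *: wmul _ _ _ _ x y;
  wmulA : forall n m l p q r (x : wpiece n p) (y : wpiece m q) (z : wpiece l r),
      wmul _ _ _ _ (wmul _ _ _ _ x y) z = bcast (addnA n m l) (addrA p q r) (wmul _ _ _ _ x (wmul _ _ _ _ y z));
  wmul1l : forall n p (x : wpiece n p),
      wmul _ _ _ _ wone x = bcast (esym (add0n n)) (esym (add0r p)) x;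
  wmul1r : forall n p (x : wpiece n p),
      wmul _ _ _ _ x wone = bcast (esym (addn0 n)) (esym (addr0 p)) x;
  wleibniz : forall n m p q (x : wpiece n p) (y : wpiece m q),
      wd _ _ (wmul _ _ _ _ x y) =
        bcast (addSn n m) (erefl _) (wmul _ _ _ _ (wd _ _ x) y)
        + (-1) ^+ n *: bcast (addnS n m) (erefl _) (wmul _ _ _ _ x (wd _ _ y))
}.

Set Implicit Arguments. Unset Strict Implicit. Unset Printing Implicit Defensive.

Arguments wd {K w n p}.
Arguments wmul {K w n m p q}.
Arguments wone {K w}.
Arguments wpiece {K} w n p.

Section Defs.
Variables (K : fieldType) (A : wdga K).

Definition trivial_piece (n : nat) (p : int) : Prop :=
  forall x : wpiece A n p, x = 0.

Definition positive_weight : Prop :=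
  (forall p : int, p != 0 -> trivial_piece 0 p) /\
  (forall (n : nat) (p : int), (0 < n)%N -> p <= 0 -> trivial_piece n p).

Definition cocycle n p (x : wpiece A n p) : Prop := wd x = 0.

Definition coboundary n p : wpiece A n p -> Prop :=
  match n return wpiece A n p -> Prop with
  | 0 => fun x => x = 0
  | m.+1 => fun x => exists y : wpiece A m p, wd y = x
  end.

Definition nontrivial_cohomology (n : nat) (p : int) : Prop :=
  exists x : wpiece A n p, cocycle x /\ ~ coboundary x.

(* H^*(A) = (+)_{n,p} H^n(A_p) is finite dimensional: it is spanned by the
   classes of finitely many (bihomogeneous) cocycles. *)
Definition fin_dim_cohomology : Prop :=
  exists (S : seq (nat * int)) (g : forall n p, seq (wpiece A n p)),
    (forall n p, (n, p) \notin S -> g n p = [::]) /\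
    (forall n p i, (i < size (g n p))%N -> cocycle (g n p)`_i) /\
    (forall n p (x : wpiece A n p), cocycle x ->
       exists c : nat -> K,
         coboundary (x - \sum_(i < size (g n p)) c i *: (g n p)`_i)).

Definition segmented (alpha : rat) (k : nat) : Prop :=
  forall (n : nat) (p : int), nontrivial_cohomology n p ->
    alpha * n%:R <= p%:~R /\ p%:~R <= alpha * (n + k)%N%:R.

End Defs.

From mathcomp Require Import all_boot all_order all_algebra.
From mathcomp Require Import zify.
Import Order.TTheory GRing.Theory Num.Theory.
Local Open Scope ring_scope.

(* The nonzero cohomology lives in finitely many bidegrees (n, p), so both n
   and p are bounded by some M > 0.  Positivity of the weights forces p = 0 for
   n = 0 and 1 <= p for n > 0, hence n / M <= 1 <= p when n > 0; and p <= M
   <= (n + M^2) / M.  So alpha = 1/M and k = M^2 work. *)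

Lemma bidegree_seq_bounded (S : seq (nat * int)) :
  exists2 M : nat, (0 < M)%N &
    forall n p, (n, p) \in S -> (n <= M)%N /\ p <= M%:Z.
Proof.
exists (\max_(x <- S) maxn x.1 `|x.2|).+1 => // n p np_S.
have := @leq_bigmax_seq _ S xpredT (fun x => maxn x.1 `|x.2|) _ np_S isT.
rewrite geq_max /= => /andP[n_le p_le]; split; first exact: leqW.
by apply: le_trans (lez_abs p) _; rewrite lez_nat; exact: leqW.
Qed.

Lemma segment_of_bounded_bidegree (R : realFieldType) (M n : nat) (p : int) :
  (0 < M)%N -> (n <= M)%N -> p <= M%:Z -> (if n is 0 then p = 0 else 0 < p) ->
  M%:R^-1 * n%:R <= (p%:~R : R) <= M%:R^-1 * (n + M * M)%N%:R.
Proof.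
move=> M_gt0 n_le p_le p_sign.
rewrite ler_pdivrMl ?ler_pdivlMl ?ltr0n //.
have -> : M%:R * p%:~R = (M%:Z * p)%:~R :> R by rewrite intrM.
rewrite -[n%:R]/((n%:Z)%:~R : R) -[(n + M * M)%N%:R]/(((n + M * M)%N%:Z)%:~R : R).
rewrite !ler_int.
by case: n n_le p_sign => [|n] ? ?; apply/andP; split; nia.
Qed.

Section WeightedCohomology.
Variables (K : fieldType) (A : wdga K).

Lemma coboundary0 n p : coboundary (0 : wpiece A n p).
Proof. by case: n => [|n] //=; exists 0; rewrite linear0. Qed.

Lemma trivial_piece_cohomology n p :
  trivial_piece A n p -> ~ nontrivial_cohomology A n p.
Proof. by move=> triv [x [_ []]]; rewrite (triv x); exact: coboundary0. Qed.

Lemma nontrivial_cohomology_weight n p :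
  positive_weight A -> nontrivial_cohomology A n p ->
  if n is 0 then p = 0 else 0 < p.
Proof.
move=> [deg0_weight0 pos_weight] nt; case: n nt => [|n] nt.
  have [//|p_neq0] := eqVneq p 0.
  by case: (trivial_piece_cohomology _ _ (deg0_weight0 p p_neq0) nt).
rewrite ltNge; apply/negP => /(pos_weight n.+1 p isT) triv.
exact: trivial_piece_cohomology _ _ triv nt.
Qed.

Lemma fin_dim_cohomology_support :
  fin_dim_cohomology A ->
  exists S : seq (nat * int),
    forall n p, nontrivial_cohomology A n p -> (n, p) \in S.
Proof.
move=> [S [g [g_supp [_ g_span]]]]; exists S => n p [x [x_cocycle x_nonexact]].
apply/negPn/negP => np_notin_S; apply: x_nonexact.
have [c] := g_span n p x x_cocycle.
by rewrite (g_supp n p np_notin_S) big_ord0 subr0.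
Qed.

End WeightedCohomology.

Theorem proposition3p13 (K : fieldType) (A : wdga K) :
  positive_weight A -> fin_dim_cohomology A ->
  exists (alpha : rat) (k : nat), 0 < alpha /\ segmented A alpha k.
Proof.
move=> pos_weight /fin_dim_cohomology_support [S S_supp].
have [M M_gt0 S_bounded] := bidegree_seq_bounded S.
exists M%:R^-1, (M * M)%N; split; first by rewrite invr_gt0 ltr0n.
move=> n p nt; have [n_le p_le] := S_bounded n p (S_supp n p nt).
apply/andP; apply: segment_of_bounded_bidegree => //.
exact: nontrivial_cohomology_weight pos_weight nt.
Qed.
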